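(* In the construction described in the context, $\sum_{i=1}^{t-1}p_G(C_i)\ge\Delta$.
   Context: The profit of $D\subseteq E$ is $p_G(D)=\mathrm{MST}(G\setminus D)-\mathrm{MST}(G)$, where $\mathrm{MST}(H)$ is the minimum spanning tree weight of $H$ w.r.t. $w$ and $\mathrm{MST}(H)=\infty$ if $H$ is disconnected. Setting: $G=(V,E)$ is a connected finite undirected graph (parallel edges allowed), $w:E\to\mathbb{R}_{\ge0}$ edge weights, $c:E\to\mathbb{R}_{>0}$ edge costs, $n=|V|$. For $S\subseteq V$, $C_G(S)=\{e\in E:|e\cap S|=1\}$ (complete cut; its edges cross it) and $C_G(S,W)=\{e\in C_G(S):w(e)<W\}$ (partial cut). $F\subseteq E$ is a set with $G'=G\setminus F=(V,E\setminus F)$ connected; $B=c(F)$ and $\Delta=\mathrm{MST}(G')-\mathrm{MST}(G)$. Construction: let $T$ be a minimum spanning tree of $G$ and $T\cap F=\{e_1,\dots,e_{t-1}\}$, with $t\ge2$. Removing these edges splits $T$ into components with vertex sets $A_1,\dots,A_t$ (a partition of $V$). Let $G'_{cc}$ be the multigraph with vertex set $V_{cc}=\{A_1,\dots,A_t\}$ having, for every edge $\{u,v\}\in E\setminus F$ with $u\in A_i$, $v\in A_j$, an edge between $A_i$ and $A_j$ of weight $w(\{u,v\})$ (identified with the original edge). Let $T'_{cc}$ be a minimum spanning tree of $G'_{cc}$, with edges $e'_1,\dots,e'_{t-1}$ indexed so that $w(e'_1)\le\dots\le w(e'_{t-1})$ (ties broken arbitrarily). For each $i$, deleting $e'_i,e'_{i+1},\dots,e'_{t-1}$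 from $T'_{cc}$ leaves a forest in which $e'_i$ joins two components $L_i,R_i\subseteq V_{cc}$. Counters $k(A)=0$ for all $A\in V_{cc}$ initially, and $k(S)=\max_{A\in S}k(A)$. For $i=1,\dots,t-1$ in order: set $X_i=L_i$ if $k(L_i)\le k(R_i)$, else $X_i=R_i$; then increase $k(A)$ by $1$ for every $A\in X_i$. Identifying a set of vertices of $G'_{cc}$ with the union of the corresponding vertex sets in $V$, define $C_i=C_G(X_i,w(e'_i))$. *)

From HB Require Import structures.
From mathcomp Require Import all_boot all_order all_algebra.
From mathcomp Require Import constructive_ereal.
Set Implicit Arguments. Unset Strict Implicit. Unset Printing Implicit Defensive.
Import Order.TTheory GRing.Theory Num.Theory.
Local Open Scope ring_scope.

(* A finite undirected multigraph: vertex type V, edge type E, and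
   [ends e = (u, v)] the two endpoints of e (orientation irrelevant).
   A subgraph is given by a set of edges F : {set E} (vertex set is all of V). *)
Section Graphs.
Variables (V E : finType) (ends : E -> V * V).

Definition adj (F : {set E}) : rel V :=
  fun x y => [exists e in F, (ends e == (x, y)) || (ends e == (y, x))].

Definition connectedb (F : {set E}) : bool :=
  [forall x, forall y, connect (adj F) x y].

(* T is a spanning tree of (V, F): T is a connected spanning subgraph which is
   acyclic (no edge of T lies on a cycle of T, i.e. its endpoints are
   disconnected in T minus that edge; this also excludes loops). *)
Definition spanning_tree (F T : {set E}) : bool :=
  [&& T \subset F, connectedb T &
      [forall e in T, ~~ connect (adj (T :\ e)) (ends e).1 (ends e).2]].

Variable R : realFieldType.
Variable w : E -> R.

Definition weight (T : {set E}) : R := \sum_(e in T) w e.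

(* MST(V,F): minimum weight of a spanning tree, +oo if (V,F) is disconnected *)
Definition MST (F : {set E}) : \bar R :=
  \big[Order.min/+oo%E]_(T : {set E} | spanning_tree F T) (weight T)%:E.

Definition is_MST (F T : {set E}) : Prop :=
  spanning_tree F T /\
  forall T' : {set E}, spanning_tree F T' -> weight T <= weight T'.

Definition profit (D : {set E}) : \bar R := (MST (~: D) - MST setT)%E.

Definition crosses (S : {set V}) (e : E) : bool :=
  ((ends e).1 \in S) != ((ends e).2 \in S).
Definition cut (S : {set V}) : {set E} := [set e | crosses S e].
Definition pcut (S : {set V}) (W : R) : {set E} :=
  [set e | crosses S e & w e < W].

End Graphs.

(* The counter process on the vertex set Vc of the contracted graph.
   L i, R i : the two sides at step i (0-based). *)
Section Counters.
Variables (Vc : finType) (L Rs : nat -> {set Vc}).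

Definition kset (k : Vc -> nat) (S : {set Vc}) : nat := (\max_(A in S) k A)%N.

Definition Xsel (k : Vc -> nat) (i : nat) : {set Vc} :=
  if (kset k (L i) <= kset k (Rs i))%N then L i else Rs i.

Fixpoint kstate (i : nat) : Vc -> nat :=
  match i with
  | 0 => fun _ => 0%N
  | i'.+1 => fun A => (kstate i' A + (A \in Xsel (kstate i') i'))%N
  end.

Definition Xstep (i : nat) : {set Vc} := Xsel (kstate i) i.

End Counters.

From HB Require Import structures.
From mathcomp Require Import all_boot all_order all_algebra.
From mathcomp Require Import constructive_ereal ring lra.
Import Order.TTheory GRing.Theory Num.Theory.
Local Open Scope ring_scope.

Set Implicit Arguments. Unset Strict Implicit. Unset Printing Implicit Defensive.

(* Since [T'_cc] spans [G'_cc], the edges of [T \ F] together with [T'_cc]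
   span [G'], so [Delta <= w(T'_cc) - w(T \cap F)].  After contracting the
   components of [T \ F], the edges of [T \cap F] connect all the [A_j].  Insert
   [e'_1, e'_2, ...] into this graph one at a time, each time removing an edge
   [h_i] of [T \cap F] that crosses [X_i]: one exists, and connectivity is kept,
   because [X_i] is a component of the forest [e'_1 ... e'_(i-1)] which [e'_i]
   leaves.  The [h_i] are distinct, and by the cut property of [T] we get
   [p_G(C_i) >= w(e'_i) - w(h_i)]; summing gives the bound.  Neither the order
   of the [e'_i] nor the counter rule choosing [X_i] among [L_i, R_i] matters. *)

Section Connectivity.
Variables (V E : finType) (ends : E -> V * V).
Implicit Types (S : {set E}) (X : {set V}).

Definition component S x : {set V} := [set y | connect (adj ends S) x y].

Lemma adjP S x y :
  reflect (exists2 e, e \in S & ends e = (x, y) \/ ends e = (y, x)) (adj ends S x y).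
Proof.
apply: (iffP existsP) => [[e /andP[eS /orP[/eqP|/eqP] He]]|[e eS [He|He]]].
- by exists e => //; left.
- by exists e => //; right.
- by exists e; rewrite eS He eqxx.
- by exists e; rewrite eS He eqxx orbT.
Qed.

Lemma adj_sym S : symmetric (adj ends S).
Proof. by move=> x y; apply/adjP/adjP => -[e eS He]; exists e => //; tauto. Qed.

Lemma connect_adj_sym S : connect_sym (adj ends S).
Proof. exact/sym_connect_sym/adj_sym. Qed.

Lemma adj_edge S e : e \in S -> adj ends S (ends e).1 (ends e).2.
Proof. by move=> eS; apply/adjP; exists e => //; left; case: (ends e). Qed.

Lemma connect_adj_sub S1 S2 x y :
  (forall e, e \in S1 -> connect (adj ends S2) (ends e).1 (ends e).2) ->
  connect (adj ends S1) x y -> connect (adj ends S2) x y.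
Proof.
move=> S12; apply: connect_sub => a b /adjP[e /S12 + [He|He]]; rewrite He //=.
by rewrite connect_adj_sym.
Qed.

Lemma connect_adj_subset S1 S2 x y :
  S1 \subset S2 -> connect (adj ends S1) x y -> connect (adj ends S2) x y.
Proof.
by move=> /subsetP S12; apply: connect_adj_sub => e /S12 /adj_edge /connect1.
Qed.

Lemma connectedb_sub S1 S2 :
  (forall e, e \in S1 -> connect (adj ends S2) (ends e).1 (ends e).2) ->
  connectedb ends S1 -> connectedb ends S2.
Proof.
move=> S12 /forallP c1; apply/forallP => x; apply/forallP => y.
by apply: connect_adj_sub S12 _; move/forallP: (c1 x).
Qed.

Lemma connectedb_subset S1 S2 :
  S1 \subset S2 -> connectedb ends S1 -> connectedb ends S2.
Proof.
by move=> /subsetP S12; apply: connectedb_sub => e /S12 /adj_edge /connect1.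
Qed.

Lemma component_crossesN S x e : e \in S -> ~~ crosses ends (component S x) e.
Proof.
move=> /adj_edge /connect1 c12; rewrite /crosses !inE negbK; apply/eqP; apply/idP/idP.
  by move/connect_trans; apply.
by move/connect_trans; apply; rewrite connect_adj_sym.
Qed.

Lemma crossesP X e : crosses ends X e ->
  exists u v, [/\ u \in X, v \notin X & ends e = (u, v) \/ ends e = (v, u)].
Proof.
rewrite /crosses; case: (ends e) => a b /=.
case aX: (a \in X); case: (b \in X) / idP => // bX _.
  by exists a, b; split => //; [apply/negP | left].
by exists b, a; split; rewrite ?aX //; right.
Qed.

Lemma path_avoid S e x y p :
  path (adj ends S) y p -> x \notin y :: p ->
  (ends e).1 = x \/ (ends e).2 = x -> path (adj ends (S :\ e)) y p.
Proof.
elim: p y => [//|z p IH] y /= /andP[/adjP[e' e'S He'] zp].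
rewrite in_cons negb_or => /andP[xy xzp] He; rewrite IH // andbT.
apply/adjP; exists e' => //; rewrite !inE e'S andbT; apply: contraNneq xzp => ee'.
move: xy; rewrite in_cons; subst e'.
by case: He He' => <- [->|->] /=; rewrite ?eqxx.
Qed.

Lemma path_exit_edge S X p x :
  path (adj ends S) x p -> uniq (x :: p) -> x \in X -> last x p \notin X ->
  exists2 g, g \in S & exists a b, [/\ ends g = (a, b) \/ ends g = (b, a),
     a \in X, b \notin X, connect (adj ends (S :\ g)) x a &
     connect (adj ends (S :\ g)) b (last x p)].
Proof.
elim: p x => [|y p IH] x /=; first by move=> _ _ ->.
move=> /andP[/adjP[e eS He] yp] /andP[xyp uyp] xX lX.
case yX: (y \in X).
- have [g gS [a [b [Hg aX bX xa bl]]]] := IH y yp uyp yX lX.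
  exists g => //; exists a, b; split => //; apply: connect_trans xa.
  apply/connect1/adjP; exists e => //; rewrite !inE eS andbT.
  apply: contraNneq bX => eg; subst e.
  by case: Hg He => -> [] [] ? ?; subst.
- exists e => //; exists x, y; split; rewrite ?yX //.
  apply/connectP; exists p => //; apply: (@path_avoid _ _ x) => //.
  by case: He => ->; [left|right].
Qed.

Lemma connectedb_exchange S X h : connectedb ends S -> crosses ends X h ->
  exists2 g, g \in S & crosses ends X g /\ connectedb ends ((S :\ g) :|: [set h]).
Proof.
move=> /forallP cS /crossesP[u [v [uX vX Hh]]].
have /connectP[p0 pp0 lp0] : connect (adj ends S) u v by move/forallP: (cS u).
case/shortenP: pp0 lp0 => p pp up _ lp.
have lX : last u p \notin X by rewrite -lp.
have [g gS [a [b [Hg aX bX ua bv]]]] := path_exit_edge pp up uX lX.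
exists g => //; split.
  by rewrite /crosses; case: Hg => -> /=; rewrite aX (negbTE bX).
set S' := (S :\ g) :|: [set h].
have sub : S :\ g \subset S' by apply: subsetUl.
apply: connectedb_sub (introT forallP cS) => e eS.
have [->|ne] := eqVneq e g; last first.
  by apply/connect1/adj_edge; rewrite !inE ne eS.
have ab : connect (adj ends S') a b.
  apply: (connect_trans (y := u)).
    by rewrite connect_adj_sym; apply: connect_adj_subset sub ua.
  apply: (connect_trans (y := v)); last first.
    by rewrite connect_adj_sym; apply: connect_adj_subset sub _; rewrite lp.
  by apply/connect1/adjP; exists h => //; rewrite !inE eqxx orbT.
by case: Hg => -> //=; rewrite connect_adj_sym.
Qed.

Lemma forest_exchange S Fo e a b :
  connectedb ends (S :|: Fo) -> ends e = (a, b) \/ ends e = (b, a) ->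
  ~~ connect (adj ends Fo) a b ->
  exists2 g, g \in S :\: Fo &
    crosses ends (component Fo a) g /\ connectedb ends ((S :\ g) :|: (e |: Fo)).
Proof.
move=> cS He ab.
have aX : a \in component Fo a by rewrite inE connect0.
have bX : b \notin component Fo a by rewrite inE.
have eX : crosses ends (component Fo a) e.
  by rewrite /crosses; case: He => -> /=; rewrite aX ?(negbTE bX).
have [g gS [gX cS']] := connectedb_exchange cS eX.
have gFo : g \notin Fo by apply: contraTN gX; apply: component_crossesN.
exists g; first by move: gS; rewrite !inE (negbTE gFo) orbF => ->.
split=> //; apply: connectedb_subset cS'; apply/subsetP => x.
rewrite !inE => /orP[/andP[xg /orP[xS|xFo]]|->]; by rewrite ?xg ?xS ?xFo ?orbT.
Qed.

End Connectivity.

Section MinimumSpanningTrees.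
Variables (V E : finType) (ends : E -> V * V) (R : realFieldType) (w : E -> R).
Hypothesis w_ge0 : forall e, 0 <= w e.
Implicit Types (S T D : {set E}).

Lemma weight_subset S1 S2 : S1 \subset S2 -> weight w S1 <= weight w S2.
Proof.
move=> S12; rewrite /weight [X in _ <= X](big_setID S1) /= (setIidPr S12).
by rewrite lerDl sumr_ge0.
Qed.

Lemma weight_setU_le S1 S2 : weight w (S1 :|: S2) <= weight w S1 + weight w S2.
Proof.
rewrite /weight (big_setID S1) /= setUK setDUl setDv set0U lerD2l.
exact/weight_subset/subsetDl.
Qed.

Lemma weight_exchange S g h : g \in S -> h \notin S ->
  weight w ((S :\ g) :|: [set h]) = weight w S - w g + w h.
Proof.
move=> gS hS; rewrite setUC /weight big_setU1 /=; last by rewrite !inE negb_and hS orbT.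
by rewrite (big_setD1 g gS) /=; ring.
Qed.

Local Open Scope ereal_scope.

Lemma MST_le_weight D S : spanning_tree ends D S -> MST ends w D <= (weight w S)%:E.
Proof. exact: bigmin_le_cond. Qed.

Lemma le_MST D y : (forall S, spanning_tree ends D S -> (y <= weight w S)%R) ->
  y%:E <= MST ends w D.
Proof. by move=> yS; apply: le_bigmin => [|S /yS]; rewrite ?leey ?lee_fin. Qed.

Lemma MST_eq_weight D T : is_MST ends w D T -> MST ends w D = (weight w T)%:E.
Proof.
by case=> DT Tmin; apply/eqP; rewrite eq_le MST_le_weight //; apply: le_MST.
Qed.

(* Delete edges lying on cycles one at a time until a spanning tree remains. *)
Lemma MST_le_connected D S : S \subset D -> connectedb ends S ->
  MST ends w D <= (weight w S)%:E.
Proof.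
have [n] := ubnP #|S|; elim: n S => // n IH S /ltnSE leSn SD cS.
have [acyc|] := boolP [forall e in S, ~~ connect (adj ends (S :\ e)) (ends e).1 (ends e).2].
  by apply: MST_le_weight; rewrite /spanning_tree SD cS acyc.
case/forall_inPn => e eS /negPn ce.
have cS' : connectedb ends (S :\ e).
  apply: connectedb_sub cS => e' e'S; have [->//|ne] := eqVneq e' e.
  by apply/connect1/adj_edge; rewrite !inE ne e'S.
have lt : (#|S :\ e| < n)%N by rewrite (cardsD1 e S) eS in leSn.
apply: le_trans (IH _ lt (subset_trans (subD1set S e) SD) cS') _.
by rewrite lee_fin weight_subset ?subD1set.
Qed.

(* Cut property: a spanning tree avoiding the light edges across [X] must use
   an edge of weight [>= W] across [X]; exchanging it for [h] gives a spanning
   subgraph of [G], so it weighs at least [w(T) + W - w(h)]. *)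
Lemma profit_pcut_ge T X W h : is_MST ends w setT T -> crosses ends X h ->
  (W - w h)%:E <= profit ends w (pcut ends w X W).
Proof.
move=> MST_T hX; have [_ Tmin] := MST_T.
rewrite /profit (MST_eq_weight MST_T) leeBrDr // -EFinD.
apply: le_MST => S /and3P[SC cS acS].
have TS : (weight w T <= weight w S)%R.
  by apply: Tmin; rewrite /spanning_tree subsetT cS acS.
have [Wh|hW] := leP W (w h); first lra.
have hS : h \notin S by apply: contraTN hX => /(subsetP SC); rewrite !inE hW andbT.
have [g gS [gX cS']] := connectedb_exchange cS hX.
have := MST_le_connected (subsetT _) cS'.
rewrite (MST_eq_weight MST_T) lee_fin weight_exchange //.
have : ~~ (w g < W)%R by have := subsetP SC g gS; rewrite !inE gX.
by rewrite -leNgt; lra.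
Qed.

End MinimumSpanningTrees.

Section Contraction.
Variables (V Vc E : finType) (ends : E -> V * V) (cc : V -> Vc).

Definition contract_ends (e : E) : Vc * Vc := (cc (ends e).1, cc (ends e).2).

Lemma crosses_contract (X : {set Vc}) e :
  crosses contract_ends X e = crosses ends [set x | cc x \in X] e.
Proof. by rewrite /crosses !inE. Qed.

Lemma connectedb_contract (S D : {set E}) :
  (forall A, exists x, cc x = A) ->
  (forall e, e \in S :\: D -> cc (ends e).1 = cc (ends e).2) ->
  connectedb ends S -> connectedb contract_ends (S :&: D).
Proof.
move=> cc_surj ccSD /forallP cS; apply/forallP => A; apply/forallP => B.
have [[x <-] [y <-]] := (cc_surj A, cc_surj B).
move/forallP: (cS x) => /(_ y) /connectP[p + ->].
elim: p x => [|z p IH] x /=; first by rewrite connect0.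
case/andP=> /adjP[e eS He] /IH; apply: connect_trans.
have [eD|eD] := boolP (e \in D).
  apply/connect1/adjP; exists e; first by rewrite inE eS.
  by rewrite /contract_ends; case: He => ->; [left|right].
have /ccSD : e \in S :\: D by rewrite inE eD.
by case: He => -> /= ->; rewrite connect0.
Qed.

Lemma connectedb_uncontract (K S : {set E}) :
  (forall x y, cc x = cc y -> connect (adj ends K) x y) ->
  connectedb contract_ends S -> connectedb ends (K :|: S).
Proof.
move=> ccK /forallP cS; apply/forallP => x; apply/forallP => y.
have KS x' y' : cc x' = cc y' -> connect (adj ends (K :|: S)) x' y'.
  by move/ccK; apply: connect_adj_subset; apply: subsetUl.
move/forallP: (cS (cc x)) => /(_ (cc y)) /connectP[p + ccy].
elim: p x ccy => [|B p IH] x /= ccy; first by move=> _; exact: KS (esym ccy).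
case/andP=> /adjP[e eS He] pB.
have eKS : adj ends (K :|: S) (ends e).1 (ends e).2 by rewrite adj_edge // inE eS orbT.
case: He; rewrite /contract_ends => -[ex eB]; subst B.
  apply: connect_trans (KS _ _ (esym ex)) _.
  by apply: connect_trans (connect1 eKS) (IH _ ccy pB).
apply: connect_trans (KS _ _ (esym eB)) _.
rewrite adj_sym in eKS.
by apply: connect_trans (connect1 eKS) (IH _ ccy pB).
Qed.

End Contraction.

Section ForestCutMatching.
Variables (V E : finType) (ends : E -> V * V) (n : nat) (f : 'I_n -> E).
Variables (X : nat -> {set V}) (S : {set E}).

Definition prefix_edges (k : nat) : {set E} := [set f j | j in 'I_n & (j < k)%N].

Lemma prefix_edges_acyclic : injective f ->
  [forall e in [set f i | i in 'I_n], ~~ connect (adj ends ([set f i | i in 'I_n] :\ e))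
                                             (ends e).1 (ends e).2] ->
  forall i : 'I_n, ~~ connect (adj ends (prefix_edges i)) (ends (f i)).1 (ends (f i)).2.
Proof.
move=> f_inj /forall_inP/(_ _ (imset_f _ _)) acyc i; have := acyc i isT.
apply: contra; apply: connect_adj_subset; apply/subsetP => _ /imsetP[j + ->].
by rewrite !inE /= => ltji; rewrite imset_f // andbT (inj_eq f_inj) neq_ltn ltji.
Qed.

Hypothesis S_conn : connectedb ends S.
Hypothesis f_acyclic : forall i : 'I_n,
  ~~ connect (adj ends (prefix_edges i)) (ends (f i)).1 (ends (f i)).2.
Hypothesis X_side : forall i : 'I_n,
  X i = component ends (prefix_edges i) (ends (f i)).1 \/
  X i = component ends (prefix_edges i) (ends (f i)).2.

Lemma prefix_edgesS (i : 'I_n) : prefix_edges i.+1 = f i |: prefix_edges i.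
Proof.
apply/setP => e; apply/imsetP/setU1P => [[j]|[->|/imsetP[j]]]; rewrite ?inE.
- rewrite ltnS leq_eqVlt => /orP[/eqP/val_inj -> ->|ltji ->]; first by left.
  by right; apply: imset_f; rewrite inE.
- by exists i => //; rewrite inE /=.
- by move=> ltji ->; exists j => //; rewrite inE ltnS ltnW.
Qed.

Definition matched_prefix (k : nat) (hs : seq E) : Prop :=
  [/\ size hs = k, uniq hs, {subset hs <= S},
      forall j : 'I_n, (j < k)%N -> crosses ends (X j) (nth (f j) hs j) &
      connectedb ends ((S :\: [set e in hs]) :|: prefix_edges k)].

Lemma matched_prefix_rcons (i : 'I_n) hs :
  matched_prefix i hs -> exists g, matched_prefix i.+1 (rcons hs g).
Proof.
case=> size_hs uniq_hs hsS hsX cur.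
have [a [b [Xi ab]]] : exists a b, X i = component ends (prefix_edges i) a /\
    (ends (f i) = (a, b) \/ ends (f i) = (b, a)).
  case: (X_side i) => ->; case: (ends (f i)) => x y.
    by exists x, y; split => //; left.
  by exists y, x; split => //; right.
have nab : ~~ connect (adj ends (prefix_edges i)) a b.
  move: (f_acyclic i); case: ab => -> //=.
  by rewrite connect_adj_sym.
have [g gSH [gX cur']] := forest_exchange cur ab nab.
have gNhs : g \notin hs by move: gSH; rewrite !inE => /andP[_ /andP[]].
exists g; split.
- by rewrite size_rcons size_hs.
- by rewrite rcons_uniq gNhs.
- by move=> e; rewrite mem_rcons in_cons => /orP[/eqP->|/hsS//]; case/setDP: gSH => /setDP[].
- move=> j; rewrite ltnS nth_rcons size_hs leq_eqVlt => /orP[/eqP ji|ltji].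
    by rewrite ji ltnn eqxx Xi.
  by rewrite ltji; apply: hsX.
- suff -> : (S :\: [set e in rcons hs g]) :|: prefix_edges i.+1 =
            ((S :\: [set e in hs]) :\ g) :|: (f i |: prefix_edges i) by [].
  rewrite prefix_edgesS; congr (_ :|: _); apply/setP => e.
  by rewrite !inE mem_rcons in_cons negb_or andbA [~~ _ && _]andbC.
Qed.

Lemma forest_cut_matching : exists h : 'I_n -> E,
  [/\ injective h, forall i, h i \in S & forall i : 'I_n, crosses ends (X i) (h i)].
Proof.
have [hs [size_hs uniq_hs hsS hsX _]] : exists hs, matched_prefix n hs.
  suff : forall k, (k <= n)%N -> exists hs, matched_prefix k hs by apply.
  elim=> [_|k IH lt_kn].
    exists [::]; split => //; apply: connectedb_subset S_conn.
    by apply/subsetP => e eS; rewrite !inE eS.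
  have [hs /(@matched_prefix_rcons (Ordinal lt_kn) hs)[g ?]] := IH (ltnW lt_kn).
  by exists (rcons hs g).
exists (fun i => nth (f i) hs i); split.
- move=> i j; rewrite (set_nth_default (f i) (f j)) ?size_hs // => /eqP.
  by rewrite nth_uniq ?size_hs // => /eqP /val_inj.
- by move=> i; apply/hsS/mem_nth; rewrite size_hs.
- by move=> i; apply: hsX.
Qed.

End ForestCutMatching.

Theorem mainTheorem14
  (R : realFieldType) (V E : finType) (ends : E -> V * V) (w : E -> R)
  (Hloop : forall e, (ends e).1 != (ends e).2)
  (Hw : forall e, 0 <= w e)
  (Gconn : connectedb ends setT)
  (F : {set E}) (G'conn : connectedb ends (~: F))
  (T : {set E}) (HT : is_MST ends w setT T)
  (t : nat) (Ht : (2 <= t)%N)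
  (cc : V -> 'I_t) (cc_surj : forall A : 'I_t, exists x, cc x = A)
  (cc_comp : forall x y, (cc x == cc y) = connect (adj ends (T :\: F)) x y)
  (Tc : {set E})
  (HTc : is_MST (fun e => (cc (ends e).1, cc (ends e).2)) w (~: F) Tc)
  (f : 'I_t.-1 -> E) (f_inj : injective f) (f_img : Tc = [set f i | i in 'I_t.-1])
  (f_sorted : forall i j : 'I_t.-1, (i <= j)%N -> w (f i) <= w (f j))
  (L Rs : nat -> {set 'I_t})
  (HLR : forall i : 'I_t.-1,
     let ends_cc := fun e => (cc (ends e).1, cc (ends e).2) in
     let forest := [set f j | j in 'I_t.-1 & (j < i)%N] in
     let side := fun A : 'I_t => [set B | connect (adj ends_cc forest) A B] in
     (L i = side (cc (ends (f i)).1) /\ Rs i = side (cc (ends (f i)).2)) \/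
     (L i = side (cc (ends (f i)).2) /\ Rs i = side (cc (ends (f i)).1))) :
  let C := fun i : 'I_t.-1 =>
    pcut ends w [set x | cc x \in Xstep L Rs i] (w (f i)) in
  (MST ends w (~: F) - MST ends w setT <= \sum_(i < t.-1) profit ends w (C i))%E.
Proof.
cbv zeta; have [_ T_conn _] := and3P HT.1.
have [Tc_sub Tc_conn Tc_acyc] := and3P HTc.1.
have cc_TF x y : cc x = cc y -> connect (adj ends (T :\: F)) x y by move/eqP; rewrite cc_comp.
have [h [h_inj hTF hX]] : exists h : 'I_t.-1 -> E, [/\ injective h,
    forall i, h i \in T :&: F & forall i : 'I_t.-1,
    crosses (contract_ends ends cc) (Xstep L Rs i) (h i)].
  apply: (@forest_cut_matching _ _ _ _ f).
  - apply: connectedb_contract cc_surj _ T_conn => e eTF.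
    by apply/eqP; rewrite cc_comp; apply/connect1/adj_edge.
  - by apply: prefix_edges_acyclic f_inj _; rewrite -f_img.
  - move=> i; rewrite /Xstep /Xsel; case: ifP => _.
      by case: (HLR i) => -[-> _]; [left|right].
    by case: (HLR i) => -[_ ->]; [right|left].
have MST_G' : (MST ends w (~: F) <= (weight w (T :\: F) + weight w Tc)%:E)%E.
  apply: le_trans (MST_le_connected Hw _ (connectedb_uncontract cc_TF Tc_conn)) _.
    by rewrite subUset Tc_sub andbT; apply/subsetP => e; rewrite !inE => /andP[].
  by rewrite lee_fin weight_setU_le.
have profitC i : ((w (f i) - w (h i))%:E <=
    profit ends w (pcut ends w [set x | cc x \in Xstep L Rs i] (w (f i))))%E.
  by apply: (profit_pcut_ge Hw _ HT); rewrite -crosses_contract.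
apply: le_trans _ (lee_sum _ (fun i _ => profitC i)); rewrite sumEFin (MST_eq_weight HT).
apply: le_trans (leeB MST_G' (lexx _)) _; rewrite -EFinB lee_fin sumrB.
have -> : \sum_(i < t.-1) w (f i) = weight w Tc.
  by rewrite f_img /weight big_imset //= => i j _ _ /f_inj.
have : \sum_(i < t.-1) w (h i) <= weight w (T :&: F).
  rewrite -(big_imset _ (in2W h_inj)) /=; apply: (weight_subset Hw).
  by apply/subsetP => _ /imsetP[i _ ->].
have : weight w T = weight w (T :&: F) + weight w (T :\: F) by rewrite /weight (big_setID F).
lra.
Qed.
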